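(* Let $n\in\mathbb{N}$, let $f_1,\ldots,f_n$ be Alpert multiwavelets of multiplicity $n$, and let $1\le k\le n$. For $j\ge1$ let $a_j$ be the real number with $P_{j,j-1}(x)-P_{j-1,j}(x)=a_jP_{j-1,j-1}(x)$. Then there are real numbers $c_j$ and $d_j$ such that, almost everywhere on $[-1,1]$, \[ f_k=\begin{cases}\displaystyle\sum_{j=(k+n)/2}^{n} c_j\,Q_{j,j}, & k+n \text{ even},\\[2mm] \displaystyle\frac12\sum_{j=(k+n+1)/2}^{n} a_j d_{j-1}\,Q_{j,j}+\sum_{j=(k+n-1)/2}^{n-1} d_j\,Q_{j+1,j}, & k+n\text{ odd}.\end{cases} \]
   Context: Alpert multiwavelets of multiplicity $n\in\mathbb{N}$: real functions $f_1,\ldots,f_n$ supported on $[-1,1]$ such that (i) the restriction of each $f_i$ to $(0,1)$ is a polynomial of degree at most $n-1$; (ii) $f_k(-t)=(-1)^{k+n-1}f_k(t)$ for $t\in(0,1)$; (iii) $\int_{-1}^1 f_i(t)f_j(t)\,dt=\delta_{i,j}$ for $1\le i,j\le n$; (iv) $\int_{-1}^1 f_k(t)t^i\,dt=0$ for $i=0,1,\ldots,k+n-2$. Type I Legendre–Angelesco polynomials: for integers $n,m\ge 0$ with $n+m\ge1$, $(A_{n,m},B_{n,m})$ is the unique pair of polynomials with $\deg A_{n,m}\le n-1$, $\deg B_{n,m}\le m-1$ (degree $\le -1$ meaning the zero polynomial) such that, writing $Q_{n,m}=A_{n,m}\chi_{[-1,0]}+B_{n,m}\chi_{[0,1]}$,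 one has $\int_{-1}^1 Q_{n,m}(x)x^k\,dx=0$ for $0\le k\le n+m-2$ and $\int_{-1}^1 Q_{n,m}(x)x^{n+m-1}\,dx=1$. Type II Legendre–Angelesco polynomials: for $n,m\ge0$, $P_{n,m}$ is the unique monic polynomial of degree $n+m$ with $\int_{-1}^0 P_{n,m}(x)x^k\,dx=0$ for $0\le k\le n-1$ and $\int_0^1 P_{n,m}(x)x^k\,dx=0$ for $0\le k\le m-1$. (The difference $P_{j,j-1}-P_{j-1,j}$ is a constant multiple of $P_{j-1,j-1}$, which defines $a_j$.) *)

(* the statement is purely algebraic (piecewise polynomials and
   their integrals), stated over an arbitrary real field R. *)
From HB Require Import structures.
From mathcomp Require Import all_boot all_order all_algebra.
Set Implicit Arguments. Unset Strict Implicit. Unset Printing Implicit Defensive.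
Import Order.TTheory GRing.Theory Num.Theory.
Local Open Scope ring_scope.

Definition pint (R : fieldType) (p : {poly R}) (a b : R) : R :=
  \sum_(i < size p) p`_i * (b ^+ i.+1 - a ^+ i.+1) / (i.+1)%:R.

(* A function on [-1,1] which equals the polynomial L on (-1,0) and the
   polynomial P on (0,1) (a.e. determined by the pair (L,P)).
   pwint L P = \int_{-1}^1 of that function. *)
Definition pwint (R : fieldType) (L P : {poly R}) : R :=
  pint L (-1) 0 + pint P 0 1.

(* Type I Legendre-Angelesco: Q_{n,m} = QA n m on [-1,0], QB n m on [0,1]. *)
Definition is_typeI (R : fieldType) (QA QB : nat -> nat -> {poly R}) : Prop :=
  forall n m : nat, (0 < n + m)%N ->
    [/\ (size (QA n m) <= n)%N, (size (QB n m) <= m)%N,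
        (forall k : nat, (k.+2 <= n + m)%N ->
            pwint (QA n m * 'X^k) (QB n m * 'X^k) = 0)
      & pwint (QA n m * 'X^(n + m - 1)) (QB n m * 'X^(n + m - 1)) = 1].

Definition is_typeII (R : fieldType) (P : nat -> nat -> {poly R}) : Prop :=
  forall n m : nat,
    [/\ P n m \is monic, size (P n m) = (n + m).+1,
        (forall k : nat, (k < n)%N -> pint (P n m * 'X^k) (-1) 0 = 0)
      & (forall k : nat, (k < m)%N -> pint (P n m * 'X^k) 0 1 = 0)].

(* Alpert multiwavelets f_1..f_n of multiplicity n: f_i equals fL i on (-1,0)
   and fR i on (0,1), and vanishes outside [-1,1]. *)
Definition is_alpert (R : realFieldType) (n : nat) (fL fR : nat -> {poly R})
  : Prop :=
  forall i : nat, (1 <= i <= n)%N ->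
    [/\ (size (fR i) <= n)%N,
        (forall t : R, 0 < t < 1 ->
            (fL i).[- t] = (-1) ^+ (i + n - 1) * (fR i).[t]),
        (forall j : nat, (1 <= j <= n)%N ->
            pwint (fL i * fL j) (fR i * fR j) = (i == j)%:R)
      & (forall m : nat, (m <= i + n - 2)%N ->
            pwint (fL i * 'X^m) (fR i * 'X^m) = 0)].

From HB Require Import structures.
From mathcomp Require Import all_boot all_order all_algebra.
From mathcomp Require Import zify ring.
Set Implicit Arguments. Unset Strict Implicit. Unset Printing Implicit Defensive.
Import Order.TTheory GRing.Theory Num.Theory.
Local Open Scope ring_scope.

(* View f_k as the pair of its polynomial pieces of degree < n on [-1,0] and
   [0,1]; it is orthogonal to x^m for m < k + n - 1.  The type I functions
   Q_{1,0}, Q_{1,1}, Q_{2,1}, Q_{2,2}, ... have triangular moments (the s-th is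
   orthogonal to x^m for m < s and has moment 1 at x^s), so they form a basis
   of this 2n-dimensional space adapted to the moments, and f_k is a
   combination of those with index >= k + n - 1.  The reflection t |-> -t
   sends Q_{j,j} to -Q_{j,j} and Q_{j+1,j} to Q_{j+1,j} + a_{j+1} Q_{j+1,j+1};
   since f_k is even or odd according to the parity of k + n, averaging the
   expansion with its reflection gives the two formulas. *)

Section PolyIntegral.
Variable R : fieldType.
Implicit Types (p q : {poly R}) (a b c : R).

Lemma pintE p a b N : (size p <= N)%N ->
  pint p a b = \sum_(i < N) p`_i * (b ^+ i.+1 - a ^+ i.+1) / i.+1%:R.
Proof.
move=> le_pN; rewrite /pint.
rewrite (big_ord_widen _ (fun i => p`_i * (b ^+ i.+1 - a ^+ i.+1) / i.+1%:R) le_pN).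
rewrite big_mkcond; apply: eq_bigr => i _.
by case: ltnP => // le_pi; rewrite nth_default // !mul0r.
Qed.

Lemma pint0 a b : pint 0 a b = 0.
Proof. by rewrite /pint size_poly0 big_ord0. Qed.

Lemma pintD p q a b : pint (p + q) a b = pint p a b + pint q a b.
Proof.
set N := maxn (size p) (size q).
rewrite !(@pintE _ a b N) ?leq_maxl ?leq_maxr ?size_polyD // -big_split.
by apply: eq_bigr => i _; rewrite coefD !mulrDl.
Qed.

Lemma pintZ c p a b : pint (c *: p) a b = c * pint p a b.
Proof.
rewrite (@pintE _ a b (size p)) ?size_scale_leq // /pint mulr_sumr.
by apply: eq_bigr => i _; rewrite coefZ !mulrA.
Qed.

Lemma pint_sum (I : Type) (r : seq I) (P : pred I) (F : I -> {poly R}) a b :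
  pint (\sum_(i <- r | P i) F i) a b = \sum_(i <- r | P i) pint (F i) a b.
Proof. exact: (big_morph _ (fun p q => pintD p q a b) (pint0 a b)). Qed.

Lemma pintXn t a b : pint 'X^t a b = (b ^+ t.+1 - a ^+ t.+1) / t.+1%:R.
Proof.
rewrite /pint size_polyXn big_ord_recr /= coefXn eqxx mul1r big1 ?add0r // => i _.
by rewrite coefXn ltn_eqF // !mul0r.
Qed.

Lemma pint_comp_oppX q a b : pint (q \Po - 'X) a b = pint q (- b) (- a).
Proof.
rewrite comp_polyE pint_sum [RHS]/pint; apply: eq_bigr => i _.
rewrite pintZ -scaleN1r exprZn pintZ pintXn -[RHS]mulrA; congr (_ * _).
by rewrite mulrA (exprNn a) (exprNn b) [(-1) ^+ i.+1]exprS; congr (_ / _); ring.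
Qed.

Lemma pint_mul_expand p q d a b : (size p <= d)%N ->
  pint (p * q) a b = \sum_(i < d) p`_i * pint ('X^i * q) a b.
Proof.
move=> le_pd; have pE : p = \poly_(i < d) p`_i.
  apply/polyP=> i; rewrite coef_poly; case: ltnP => // le_di.
  by rewrite nth_default // (leq_trans le_pd).
rewrite {1}pE poly_def mulr_suml pint_sum; apply: eq_bigr => i _.
by rewrite -scalerAl pintZ.
Qed.

End PolyIntegral.

(* A function on [-1,1] given by its polynomial pieces on [-1,0] and [0,1], as
   in [pwint]; [mirror f] is the function [t |-> f (-t)]. *)
Notation "{ 'pw' R }" := ({poly R} * {poly R})%type (format "{ 'pw'  R }").

Lemma fst_sum (U V : nmodType) (I : Type) (r : seq I) (P : pred I)
    (F : I -> U * V) :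
  (\sum_(i <- r | P i) F i).1 = \sum_(i <- r | P i) (F i).1.
Proof. exact: (big_morph fst (fun _ _ => erefl) erefl). Qed.

Lemma snd_sum (U V : nmodType) (I : Type) (r : seq I) (P : pred I)
    (F : I -> U * V) :
  (\sum_(i <- r | P i) F i).2 = \sum_(i <- r | P i) (F i).2.
Proof. exact: (big_morph snd (fun _ _ => erefl) erefl). Qed.

Section PiecewisePolynomial.
Variable R : fieldType.
Implicit Types (f g : {pw R}) (p q : {poly R}) (c : R).

Definition pwdot f p := pwint (f.1 * p) (f.2 * p).
Definition moment f m := pwdot f 'X^m.
Definition mirror f : {pw R} := (f.2 \Po - 'X, f.1 \Po - 'X).
Definition pw_size_le d f := (size f.1 <= d)%N && (size f.2 <= d)%N.

Lemma pwdotDl f g p : pwdot (f + g) p = pwdot f p + pwdot g p.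
Proof. by rewrite /pwdot /pwint /= !mulrDl !pintD addrACA. Qed.

Lemma pwdotZl c f p : pwdot (c *: f) p = c * pwdot f p.
Proof. by rewrite /pwdot /pwint /= -!scalerAl !pintZ mulrDr. Qed.

Lemma pwdotNl f p : pwdot (- f) p = - pwdot f p.
Proof. by rewrite -scaleN1r pwdotZl mulN1r. Qed.

Lemma pwdotDr f p q : pwdot f (p + q) = pwdot f p + pwdot f q.
Proof. by rewrite /pwdot /pwint !mulrDr !pintD addrACA. Qed.

Lemma pwdotZr c f p : pwdot f (c *: p) = c * pwdot f p.
Proof. by rewrite /pwdot /pwint -!scalerAr !pintZ mulrDr. Qed.

Lemma pwdot0r f : pwdot f 0 = 0.
Proof. by rewrite /pwdot /pwint !mulr0 !pint0 addr0. Qed.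

Lemma pwdot_sumr (I : Type) (r : seq I) (P : pred I) (F : I -> {poly R}) f :
  pwdot f (\sum_(i <- r | P i) F i) = \sum_(i <- r | P i) pwdot f (F i).
Proof. exact: (big_morph _ (pwdotDr f) (pwdot0r f)). Qed.

Lemma momentD f g m : moment (f + g) m = moment f m + moment g m.
Proof. exact: pwdotDl. Qed.

Lemma momentZ c f m : moment (c *: f) m = c * moment f m.
Proof. exact: pwdotZl. Qed.

Lemma momentB f g m : moment (f - g) m = moment f m - moment g m.
Proof. by rewrite momentD /moment pwdotNl. Qed.

Lemma comp_oppXK p : p \Po - 'X \Po - 'X = p.
Proof.
rewrite -comp_polyA; have -> : (- 'X) \Po (- 'X) = 'X :> {poly R}.
  by rewrite -{2}scaleN1r comp_polyZ comp_polyX scaleN1r opprK.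
by rewrite comp_polyXr.
Qed.

Lemma size_comp_oppX p : size (p \Po - 'X) = size p.
Proof. by apply: size_comp_poly2; rewrite size_polyN size_polyX. Qed.

Lemma moment_mirror f m : moment (mirror f) m = (-1) ^+ m * moment f m.
Proof.
have XmE : 'X^m = ((-1) ^+ m *: 'X^m) \Po - 'X :> {poly R}.
  by rewrite comp_polyZ comp_Xn_poly -scaleN1r exprZn scalerA -expr2 sqrr_sign scale1r.
rewrite /moment /pwdot /pwint /= {1 2}XmE -!comp_polyM !pint_comp_oppX oppr0 opprK.
by rewrite -!scalerAr !pintZ -mulrDr addrC.
Qed.

Lemma mirrorD f g : mirror (f + g) = mirror f + mirror g.
Proof. by rewrite /mirror /= !comp_polyD. Qed.

Lemma mirrorZ c f : mirror (c *: f) = c *: mirror f.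
Proof. by rewrite /mirror /= !comp_polyZ. Qed.

Lemma mirror0 : mirror 0 = 0.
Proof. by rewrite /mirror /= !comp_poly0. Qed.

Lemma mirror_sum (I : Type) (r : seq I) (P : pred I) (F : I -> {pw R}) :
  mirror (\sum_(i <- r | P i) F i) = \sum_(i <- r | P i) mirror (F i).
Proof. exact: (big_morph _ mirrorD mirror0). Qed.

Lemma pw_size_leD d f g : pw_size_le d f -> pw_size_le d g ->
  pw_size_le d (f + g).
Proof.
case/andP=> f1 f2 /andP[g1 g2]; apply/andP; split=> /=;
  by apply: leq_trans (size_polyD _ _) _; rewrite geq_max ?f1 ?f2.
Qed.

Lemma pw_size_leZ d c f : pw_size_le d f -> pw_size_le d (c *: f).
Proof.
by case/andP=> f1 f2; apply/andP; split; apply: leq_trans (size_scale_leq _ _) _.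
Qed.

Lemma pw_size_leN d f : pw_size_le d (- f) = pw_size_le d f.
Proof. by rewrite /pw_size_le /= !size_polyN. Qed.

Lemma pw_size_leB d f g : pw_size_le d f -> pw_size_le d g ->
  pw_size_le d (f - g).
Proof. by move=> f_d g_d; rewrite pw_size_leD ?pw_size_leN. Qed.

Lemma pw_size_le_mirror d f : pw_size_le d (mirror f) = pw_size_le d f.
Proof. by rewrite /pw_size_le /= !size_comp_oppX andbC. Qed.

End PiecewisePolynomial.

Section Orthogonality.
Variable R : fieldType.
Implicit Types (f : {pw R}) (p : {poly R}).

Lemma pwdot_typeII (P : nat -> nat -> {poly R}) n m f : is_typeII P ->
  (size f.1 <= n)%N -> (size f.2 <= m)%N -> pwdot f (P n m) = 0.
Proof.
move=> typeII_P le_f1n le_f2m; have [_ _ orthL orthR] := typeII_P n m.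
rewrite /pwdot /pwint (pint_mul_expand _ _ _ le_f1n) (pint_mul_expand _ _ _ le_f2m).
by rewrite !big1 ?addr0 // => i _; rewrite [_ * P n m]mulrC ?orthL ?orthR ?mulr0.
Qed.

Lemma pwdot_monic f p N : p \is monic -> size p = N.+1 ->
  (forall m, (m < N)%N -> moment f m = 0) -> pwdot f p = moment f N.
Proof.
move=> mon_p size_p low_f.
have pE : p = \sum_(0 <= i < size p) p`_i *: 'X^i.
  by rewrite big_mkord -poly_def coefK.
have lead_p : p`_N = 1 by move: (monicP mon_p); rewrite lead_coefE size_p.
rewrite {1}pE pwdot_sumr size_p big_nat_recr //= big1_seq ?add0r => [|i].
  by rewrite pwdotZr lead_p mul1r.
by rewrite mem_index_iota pwdotZr => /low_f; rewrite /moment => ->; rewrite mulr0.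
Qed.

End Orthogonality.

Section TriangularFamily.
Variables (R : fieldType) (d : nat) (g : nat -> {pw R}).
Hypothesis g_size : forall s, (s < d + d)%N -> pw_size_le d (g s).
Hypothesis g_moment : forall s m, (m <= s)%N -> moment (g s) m = (m == s)%:R.
Implicit Types (f : {pw R}).

Definition coefrow f : 'rV[R]_(d + d) :=
  row_mx (\row_(i < d) f.1`_i) (\row_(i < d) f.2`_i).

Definition momentmx : 'M[R]_(d + d) :=
  col_mx (\matrix_(i < d, m < d + d) pint 'X^(i + m) (-1) 0)
         (\matrix_(i < d, m < d + d) pint 'X^(i + m) 0 1).

Lemma momentE f (m : 'I_(d + d)) :
  pw_size_le d f -> moment f m = (coefrow f *m momentmx) 0 m.
Proof.
case/andP=> le_f1d le_f2d; rewrite mul_row_col !mxE.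
rewrite /moment /pwdot /pwint (pint_mul_expand _ _ _ le_f1d).
rewrite (pint_mul_expand _ _ _ le_f2d).
by congr (_ + _); apply: eq_bigr => i _; rewrite !mxE -exprD.
Qed.

Lemma momentmx_unit : momentmx \in unitmx.
Proof.
pose G := \matrix_(s < d + d, j < d + d) coefrow (g s) 0 j.
have GME s m : (G *m momentmx) s m = moment (g s) m.
  rewrite momentE ?g_size //.
  have -> : coefrow (g s) = row s G by apply/rowP => j; rewrite !mxE.
  by rewrite -row_mul [RHS]mxE.
have trig : is_trig_mx (G *m momentmx)^T.
  apply/forallP => i; apply/forallP => j; apply/implyP => lt_ij.
  by rewrite mxE GME g_moment ?ltn_eqF // ltnW.
move: (det_trig trig); rewrite det_tr det_mulmx big1 => [det1|i _]; last first.
  by rewrite mxE GME g_moment ?eqxx.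
rewrite unitmxE unitfE; apply: contra_eq_neq det1 => ->.
by rewrite mulr0 eq_sym oner_neq0.
Qed.

Lemma coefrow_eq0 f : pw_size_le d f -> coefrow f = 0 -> f = 0.
Proof.
case: f => L M /andP[/= le_Ld le_Md] row0.
congr pair; apply/polyP => i; rewrite coef0; have [lt_id|le_di] := ltnP i d.
- move: (congr1 (fun v : 'rV_(d + d) => v 0 (lshift d (Ordinal lt_id))) row0).
  by rewrite row_mxEl !mxE.
- by rewrite nth_default ?(leq_trans le_Ld).
- move: (congr1 (fun v : 'rV_(d + d) => v 0 (rshift d (Ordinal lt_id))) row0).
  by rewrite row_mxEr !mxE.
- by rewrite nth_default ?(leq_trans le_Md).
Qed.

Lemma moment_inj f : pw_size_le d f ->
  (forall m, (m < d + d)%N -> moment f m = 0) -> f = 0.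
Proof.
move=> size_f low_f; apply: coefrow_eq0 => //.
have rowM0 : coefrow f *m momentmx = 0.
  by apply/rowP => m; rewrite -momentE // mxE low_f.
by rewrite -[coefrow f](mulmxK momentmx_unit) rowM0 mul0mx.
Qed.

Lemma moment_expansion K f : (K <= d + d)%N -> pw_size_le d f ->
  (forall m, (m < K)%N -> moment f m = 0) ->
  exists w : nat -> R, (forall s, (s < K)%N -> w s = 0) /\
                       f = \sum_(0 <= s < d + d) w s *: g s.
Proof.
move=> /subnKC; move: (d + d - K)%N => r; elim: r K f => [|r IH] K f.
  rewrite addn0 => -> size_f low_f; exists (fun=> 0); split=> //.
  by rewrite (moment_inj size_f low_f) big1 // => s _; rewrite scale0r.
rewrite addnS -addSn => sizeE size_f low_f.
have lt_K : (K < d + d)%N by rewrite -sizeE leq_addr.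
pose mu := moment f K.
have low_f' m : (m < K.+1)%N -> moment (f - mu *: g K) m = 0.
  rewrite ltnS leq_eqVlt => /predU1P[->|lt_mK].
    by rewrite momentB momentZ g_moment // eqxx mulr1 subrr.
  by rewrite momentB momentZ g_moment ?(ltnW lt_mK) // ltn_eqF // mulr0 subr0 low_f.
have size_f' := pw_size_leB size_f (pw_size_leZ mu (g_size lt_K)).
have [w [w_low fE]] := IH _ _ sizeE size_f' low_f'.
exists (fun s => w s + (s == K)%:R * mu); split=> [s lt_sK|].
  by rewrite w_low ?ltn_eqF ?mul0r ?addr0 //; apply: ltnW.
under [RHS]eq_bigr do rewrite scalerDl.
rewrite big_split /= -fE (bigD1_seq K) ?mem_index_iota ?iota_uniq //= eqxx mul1r.
by rewrite big1 ?addr0 ?subrK // => s /negbTE ->; rewrite mul0r scale0r.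
Qed.

End TriangularFamily.

Section TypeI.
Variables (R : fieldType) (QA QB : nat -> nat -> {poly R}).
Hypothesis typeI : is_typeI QA QB.
Implicit Types (f : {pw R}).

Definition Q n m : {pw R} := (QA n m, QB n m).
(* [stair s] runs through Q_{1,0}, Q_{1,1}, Q_{2,1}, Q_{2,2}, ...; the indices
   of [stair s] add up to [s.+1]. *)
Definition stair s := Q s./2.+1 s.+1./2.

Lemma Q_size n m : (0 < n + m)%N ->
  (size (Q n m).1 <= n)%N /\ (size (Q n m).2 <= m)%N.
Proof. by case/typeI. Qed.

Lemma Q_size_le d n m : (0 < n + m)%N -> (n <= d)%N -> (m <= d)%N ->
  pw_size_le d (Q n m).
Proof.
move=> n_m_gt0 le_nd le_md; have [le1 le2] := Q_size n_m_gt0.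
by apply/andP; split; [apply: leq_trans le1 le_nd | apply: leq_trans le2 le_md].
Qed.

Lemma Q_moment n m i : (0 < n + m)%N -> (i <= (n + m).-1)%N ->
  moment (Q n m) i = (i == (n + m).-1)%:R.
Proof.
move=> n_m_gt0 le_i; have [_ _ orth norm] := typeI n_m_gt0.
case: eqP => [->|/eqP ne_i]; first by move: norm; rewrite subn1.
by apply: orth; rewrite -(prednK n_m_gt0) ltnS ltn_neqAle ne_i.
Qed.

Lemma Q_moment_subdiag j m : (m <= j.*2)%N ->
  moment (Q j.+1 j) m = (m == j.*2)%:R.
Proof. by have := @Q_moment j.+1 j m isT; rewrite addSn addnn. Qed.

Lemma Q_moment_diag j m : (m <= j.*2.+1)%N ->
  moment (Q j.+1 j.+1) m = (m == j.*2.+1)%:R.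
Proof. by have := @Q_moment j.+1 j.+1 m isT; rewrite addSn addnS addnn. Qed.

Lemma stair_index_sum s : (s./2.+1 + s.+1./2)%N = s.+1.
Proof. by rewrite -uphalfE uphalf_half addSn addnCA addnn odd_double_half. Qed.

Lemma stair_size d s : (s < d + d)%N -> pw_size_le d (stair s).
Proof.
rewrite addnn => lt_s; apply: Q_size_le => //; first by rewrite ltn_half_double.
by rewrite -uphalfE leq_uphalf_double ltnW.
Qed.

Lemma stair_moment s m : (m <= s)%N -> moment (stair s) m = (m == s)%:R.
Proof.
by have := @Q_moment s./2.+1 s.+1./2 m; rewrite stair_index_sum; apply.
Qed.

Lemma stair_moment_inj d f : pw_size_le d f ->
  (forall m, (m < d + d)%N -> moment f m = 0) -> f = 0.
Proof. by apply: moment_inj; [apply: stair_size | apply: stair_moment]. Qed.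

Lemma stair_expansion d K f : (K <= d + d)%N -> pw_size_le d f ->
  (forall m, (m < K)%N -> moment f m = 0) ->
  exists w : nat -> R, (forall s, (s < K)%N -> w s = 0) /\
                       f = \sum_(0 <= s < d + d) w s *: stair s.
Proof. by apply: moment_expansion; [apply: stair_size | apply: stair_moment]. Qed.

Lemma mirror_Q_diag j : mirror (Q j.+1 j.+1) = - Q j.+1 j.+1.
Proof.
apply/eqP; rewrite -addr_eq0; apply/eqP/(@stair_moment_inj j.+1).
  by rewrite pw_size_leD ?pw_size_le_mirror ?Q_size_le.
rewrite addnn => m lt_m; rewrite momentD moment_mirror Q_moment_diag //.
case: eqP => [->|_]; last by rewrite mulr0 addr0.
by rewrite -signr_odd /= odd_double mulN1r addNr.
Qed.

End TypeI.

Section TypeII.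
Variables (R : fieldType) (QA QB P : nat -> nat -> {poly R}) (a : nat -> R).
Hypotheses (typeI : is_typeI QA QB) (typeII : is_typeII P).
Hypothesis P_rec : forall j, (1 <= j)%N ->
  P j (j - 1)%N - P (j - 1)%N j = a j *: P (j - 1)%N (j - 1)%N.
Local Notation Q := (Q QA QB).

(* The recurrence P_{j+1,j} = P_{j,j+1} + a_{j+1} P_{j,j} splits the pairing
   into an orthogonal part and the top moment of the mirrored Q_{j+1,j}. *)
Lemma pwdot_mirror_Q_subdiag j : pwdot (mirror (Q j.+1 j)) (P j.+1 j) = a j.+1.
Proof.
have [monic_P size_P _ _] := typeII j j; rewrite addnn in size_P.
have [le_Q1 le_Q2] := @Q_size _ _ _ typeI j.+1 j isT.
have := P_rec (ltn0Sn j); rewrite subn1 /= => /(canRL (subrK _)) ->.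
rewrite pwdotDr pwdotZr (@pwdot_typeII _ P j j.+1) ?size_comp_oppX // addr0.
rewrite (pwdot_monic monic_P size_P) => [|m lt_m];
  rewrite moment_mirror Q_moment_subdiag ?(ltnW lt_m) //.
  by rewrite eqxx -signr_odd odd_double expr0 !mulr1.
by rewrite ltn_eqF // mulr0.
Qed.

Lemma mirror_Q_subdiag j : mirror (Q j.+1 j) = Q j.+1 j + a j.+1 *: Q j.+1 j.+1.
Proof.
pose h := mirror (Q j.+1 j) - (Q j.+1 j + a j.+1 *: Q j.+1 j.+1).
have moment_h m : moment h m = (-1) ^+ m * moment (Q j.+1 j) m
    - (moment (Q j.+1 j) m + a j.+1 * moment (Q j.+1 j.+1) m).
  by rewrite momentB momentD momentZ moment_mirror.
have low_h m : (m < j.*2.+1)%N -> moment h m = 0.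
  rewrite ltnS => le_m; rewrite moment_h !(Q_moment_subdiag, Q_moment_diag) ?leqW //.
  rewrite [m == _.+1]ltn_eqF ?ltnS // mulr0 addr0.
  case: eqP => [->|_] /=; last by rewrite mulr0 subrr.
  by rewrite -signr_odd odd_double expr0 mul1r subrr.
have top_h : moment h j.*2.+1 = 0.
  have [monic_P size_P _ _] := typeII j.+1 j; rewrite addSn addnn in size_P.
  have [le_Q1 le_Q2] := @Q_size _ _ _ typeI j.+1 j isT.
  have dot_Q2 : pwdot (Q j.+1 j.+1) (P j.+1 j) = 1.
    rewrite (pwdot_monic monic_P size_P) => [|m lt_m].
      by rewrite Q_moment_diag ?eqxx.
    by rewrite Q_moment_diag ?ltn_eqF // ltnW.
  rewrite -(pwdot_monic monic_P size_P low_h) /h pwdotDl pwdotNl pwdotDl pwdotZl.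
  by rewrite pwdot_mirror_Q_subdiag dot_Q2 (pwdot_typeII typeII) ?add0r ?mulr1 ?subrr.
apply/eqP; rewrite -subr_eq0; apply/eqP/(@stair_moment_inj _ _ _ typeI j.+1).
  by rewrite pw_size_leB ?pw_size_leD ?pw_size_le_mirror ?pw_size_leZ ?Q_size_le.
rewrite addnS addSn addnn => m; rewrite ltnS leq_eqVlt.
by case/predU1P=> [->|/low_h].
Qed.

End TypeII.


Lemma big_nat_trim_low (V : nmodType) m p n (F : nat -> V) : (m <= p <= n)%N ->
  (forall j, (m <= j < p)%N -> F j = 0) ->
  \sum_(m <= j < n) F j = \sum_(p <= j < n) F j.
Proof.
case/andP=> le_mp le_pn F0; rewrite (big_cat_nat le_mp le_pn) /=.
by rewrite big_nat_cond big1 ?add0r // => j /andP[/F0].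
Qed.

Section StairPairs.
Variables (R : fieldType) (QA QB : nat -> nat -> {poly R}).
Local Notation Q := (Q QA QB).
Local Notation stair := (stair QA QB).

Lemma stair_double j : stair j.*2 = Q j.+1 j.
Proof. by rewrite /stair doubleK -uphalfE uphalf_double. Qed.

Lemma stair_double_addn1 j : stair j.*2.+1 = Q j.+1 j.+1.
Proof. by rewrite /stair -doubleS doubleK -[j.*2.+1]/(true + j.*2)%N half_bit_double. Qed.

Lemma stair_sum_pairs (w : nat -> R) n :
  \sum_(0 <= s < n + n) w s *: stair s =
  \sum_(0 <= j < n) (w j.*2 *: Q j.+1 j + w j.*2.+1 *: Q j.+1 j.+1).
Proof.
elim: n => [|n IH]; first by rewrite !big_geq.
rewrite addnS addSn !big_nat_recr //= IH addrA.
by rewrite addnn stair_double stair_double_addn1.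
Qed.

End StairPairs.

Section Symmetrization.
Variables (R : numFieldType) (QA QB P : nat -> nat -> {poly R}) (a : nat -> R).
Hypotheses (typeI : is_typeI QA QB) (typeII : is_typeII P).
Hypothesis P_rec : forall j, (1 <= j)%N ->
  P j (j - 1)%N - P (j - 1)%N j = a j *: P (j - 1)%N (j - 1)%N.
Local Notation Q := (Q QA QB).
Local Notation stair := (stair QA QB).
Implicit Types (f : {pw R}) (w : nat -> R).

Lemma mirror_Q_pair (u v : R) j :
  mirror (u *: Q j.+1 j + v *: Q j.+1 j.+1) =
  u *: Q j.+1 j + (u * a j.+1 - v) *: Q j.+1 j.+1.
Proof.
rewrite mirrorD !mirrorZ mirror_Q_diag // (mirror_Q_subdiag typeI typeII P_rec).
by rewrite scalerDr scalerA -addrA scalerN -scalerBl.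
Qed.

Lemma half_double f : f = 2%:R^-1 *: (f + f).
Proof. by rewrite -mulr2n -scaler_nat scalerA mulVf ?pnatr_eq0 ?scale1r. Qed.

Lemma antimirror_stair_expansion w n f :
  f = \sum_(0 <= s < n + n) w s *: stair s -> mirror f = - f ->
  f = \sum_(0 <= j < n) (w j.*2.+1 - 2%:R^-1 * (a j.+1 * w j.*2)) *: Q j.+1 j.+1.
Proof.
move=> fE mirror_f; rewrite [LHS]half_double -{2}[f]opprK -mirror_f.
rewrite fE stair_sum_pairs mirror_sum -sumrB scaler_sumr; apply: eq_bigr => j _.
rewrite mirror_Q_pair opprD addrACA subrr add0r -scalerBl scalerA.
by congr (_ *: _); field.
Qed.

Lemma mirror_stair_expansion w n f :
  f = \sum_(0 <= s < n + n) w s *: stair s -> mirror f = f ->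
  f = \sum_(0 <= j < n)
        (w j.*2 *: Q j.+1 j + (2%:R^-1 * (a j.+1 * w j.*2)) *: Q j.+1 j.+1).
Proof.
move=> fE mirror_f; rewrite [LHS]half_double -{2}mirror_f.
rewrite fE stair_sum_pairs mirror_sum -big_split /= scaler_sumr; apply: eq_bigr => j _.
rewrite mirror_Q_pair addrACA -scalerDl -scalerDl !scalerDr !scalerA.
by congr (_ *: _ + _ *: _); field.
Qed.

End Symmetrization.


Lemma poly_eq0_on_unit_interval (R : numFieldType) (g : {poly R}) :
  (forall t : R, 0 < t < 1 -> g.[t] = 0) -> g = 0.
Proof.
move=> g0; apply/eqP; apply: contraT => g_neq0.
have := max_poly_roots g_neq0 (rs := [seq (i.+2%:R : R)^-1 | i <- iota 0 (size g)]).
rewrite size_map size_iota ltnn; apply.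
  apply/allP => _ /mapP[i _ ->]; apply/rootP/g0.
  by rewrite invr_gt0 ltr0n invf_lt1 ?ltr0n // ltr1n.
rewrite map_inj_uniq ?iota_uniq // => i j /invr_inj/eqP.
by rewrite eqr_nat => /eqP[].
Qed.

Section AlpertSymmetry.
Variables (R : realFieldType) (n : nat) (fL fR : nat -> {poly R}) (k : nat).
Hypotheses (alpert : is_alpert n fL fR) (k_range : (1 <= k <= n)%N).

Lemma alpert_reflect : fL k = (-1) ^+ (k + n - 1) *: (fR k \Po - 'X).
Proof.
have [_ sym _ _] := alpert k_range.
apply/eqP; rewrite -subr_eq0; apply/eqP.
have reflected0 : (fL k - (-1) ^+ (k + n - 1) *: (fR k \Po - 'X)) \Po - 'X = 0.
  apply: poly_eq0_on_unit_interval => t t01.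
  by rewrite horner_comp !hornerE horner_comp !hornerE opprK sym // subrr.
by rewrite -[LHS]comp_oppXK reflected0 comp_poly0.
Qed.

Lemma alpert_mirror :
  mirror (fL k, fR k) = (-1) ^+ (~~ odd (k + n)) *: (fL k, fR k).
Proof.
have /andP[k_gt0 _] := k_range.
rewrite -[~~ odd _]addbT -[true]/(odd 1) -oddB ?addn_gt0 ?k_gt0 // signr_odd.
have fL_comp : fL k \Po - 'X = (-1) ^+ (k + n - 1) *: fR k.
  by rewrite alpert_reflect comp_polyZ comp_oppXK.
have fR_comp : fR k \Po - 'X = (-1) ^+ (k + n - 1) *: fL k.
  by rewrite alpert_reflect scalerA -expr2 sqrr_sign scale1r.
by rewrite /mirror /= fL_comp fR_comp.
Qed.

Lemma alpert_size : pw_size_le n (fL k, fR k).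
Proof.
have [le_fR _ _ _] := alpert k_range.
by rewrite /pw_size_le /= alpert_reflect (leq_trans (size_scale_leq _ _)) ?size_comp_oppX.
Qed.

Lemma alpert_moment m : (m < k + n - 1)%N -> moment (fL k, fR k) m = 0.
Proof.
have [_ _ _ orth] := alpert k_range.
by move=> lt_m; apply: orth; lia.
Qed.

End AlpertSymmetry.

Section AlpertExpansion.
Variables (R : realFieldType) (n : nat) (fL fR : nat -> {poly R}) (k : nat).
Variables (QA QB P : nat -> nat -> {poly R}) (a : nat -> R).
Hypotheses (alpert : is_alpert n fL fR) (k_range : (1 <= k <= n)%N).
Hypotheses (typeI : is_typeI QA QB) (typeII : is_typeII P).
Hypothesis P_rec : forall j, (1 <= j)%N ->
  P j (j - 1)%N - P (j - 1)%N j = a j *: P (j - 1)%N (j - 1)%N.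
Local Notation Q := (Q QA QB).

Lemma alpert_stair_expansion : exists w : nat -> R,
  (forall s, (s < k + n - 1)%N -> w s = 0) /\
  (fL k, fR k) = \sum_(0 <= s < n + n) w s *: stair QA QB s.
Proof.
apply: (stair_expansion typeI _ (alpert_size alpert k_range)
                               (alpert_moment alpert k_range)).
by case/andP: k_range => _ le_kn; lia.
Qed.

Lemma alpert_expansion_even : ~~ odd (k + n) -> exists c : nat -> R,
  (fL k, fR k) = \sum_((k + n)./2 <= j < n.+1) c j *: Q j j.
Proof.
move=> even_kn; have [w [w0 fE]] := alpert_stair_expansion.
have /andP[k_gt0 le_kn] := k_range.
have := even_halfK even_kn; set j0 := (k + n)./2; rewrite -addnn => kn_double.
exists (fun j => w j.*2.-1 - 2%:R^-1 * (a j * w j.*2.-2)).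
rewrite (antimirror_stair_expansion typeI typeII P_rec fE); last first.
  by rewrite (alpert_mirror alpert k_range) even_kn expr1 scaleN1r.
rewrite -[RHS](@big_nat_trim_low _ 1) ?big_add1 //.
  by apply/andP; split; lia.
by move=> j /andP[j_gt0 lt_j]; rewrite !w0 ?mulr0 ?subr0 ?scale0r //; lia.
Qed.

Lemma alpert_expansion_odd : odd (k + n) -> exists d : nat -> R,
  (fL k, fR k) =
    2%:R^-1 *: \sum_((k + n).+1./2 <= j < n.+1) (a j * d (j - 1)%N) *: Q j j
    + \sum_((k + n).-1./2 <= j < n) d j *: Q j.+1 j.
Proof.
move=> odd_kn; have [w [w0 fE]] := alpert_stair_expansion.
have /andP[k_gt0 le_kn] := k_range.
have := odd_double_half (k + n); rewrite odd_kn add1n.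
set j1 := (k + n)./2 => kn.
exists (fun j => w j.*2).
rewrite (mirror_stair_expansion typeI typeII P_rec fE); last first.
  by rewrite (alpert_mirror alpert k_range) odd_kn expr0 scale1r.
rewrite -kn -doubleS -pred_Sn !doubleK big_split /= addrC scaler_sumr.
congr (_ + _).
  rewrite -[RHS](@big_nat_trim_low _ 1) ?big_add1 /=.
  - by apply: eq_bigr => j _; rewrite scalerA subn1.
  - lia.
  by move=> j /andP[j_gt0 lt_j]; rewrite w0 ?mulr0 ?mul0r ?scale0r ?scaler0 //; lia.
rewrite (@big_nat_trim_low _ 0 j1) //; first by apply/andP; split; lia.
by move=> j /andP[_ lt_j]; rewrite w0 ?scale0r //; lia.
Qed.

End AlpertExpansion.

Theorem proposition2 (R : realFieldType) (n : nat) (fL fR : nat -> {poly R})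
  (QA QB : nat -> nat -> {poly R}) (P : nat -> nat -> {poly R}) (a : nat -> R)
  (k : nat) :
  is_alpert n fL fR ->
  is_typeI QA QB ->
  is_typeII P ->
  (forall j : nat, (1 <= j)%N ->
     P j (j - 1)%N - P (j - 1)%N j = a j *: P (j - 1)%N (j - 1)%N) ->
  (1 <= k <= n)%N ->
  (~~ odd (k + n) ->
     exists c : nat -> R,
       fL k = \sum_((k + n)./2 <= j < n.+1) c j *: QA j j /\
       fR k = \sum_((k + n)./2 <= j < n.+1) c j *: QB j j) /\
  (odd (k + n) ->
     exists d : nat -> R,
       fL k = 2%:R^-1 *: \sum_((k + n).+1./2 <= j < n.+1) (a j * d (j - 1)%N) *: QA j j
              + \sum_((k + n).-1./2 <= j < n) d j *: QA j.+1 j /\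
       fR k = 2%:R^-1 *: \sum_((k + n).+1./2 <= j < n.+1) (a j * d (j - 1)%N) *: QB j j
              + \sum_((k + n).-1./2 <= j < n) d j *: QB j.+1 j).
Proof.
move=> alpert typeI typeII P_rec k_range; split.
  case/(alpert_expansion_even alpert k_range typeI typeII P_rec) => c fE.
  exists c; split; [move: (congr1 fst fE) | move: (congr1 snd fE)] => /= ->.
    by rewrite fst_sum.
  by rewrite snd_sum.
case/(alpert_expansion_odd alpert k_range typeI typeII P_rec) => d fE.
exists d; split; [move: (congr1 fst fE) | move: (congr1 snd fE)] => /= ->.
  by rewrite !fst_sum.
by rewrite !snd_sum.
Qed.
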